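(* For any formula $A$, there exists an adequate $A$-removing mapping $\mathsf{re}_A:\mathcal P\times\mathcal P\to\mathcal P$.
   Context: Formulas are built from $\bot$ and atoms by $\to$ and $\Box$; sequents $\Gamma\Rightarrow\Delta$ have finite multisets of formulas on each side; $\Box\Pi$ denotes $\{\Box B:B\in\Pi\}$. The calculus $\mathsf{Grz}_\infty+\mathsf{cut}$ has initial sequents $\Gamma,p\Rightarrow p,\Delta$ ($p$ atomic), $\Gamma,\bot\Rightarrow\Delta$, and rules $(\to_L)$ from $\Gamma,B\Rightarrow\Delta$ and $\Gamma\Rightarrow A,\Delta$ infer $\Gamma,A\to B\Rightarrow\Delta$; $(\to_R)$ from $\Gamma,A\Rightarrow B,\Delta$ infer $\Gamma\Rightarrow A\to B,\Delta$; $(\mathsf{refl})$ from $\Gamma,B,\Box B\Rightarrow\Delta$ infer $\Gamma,\Box B\Rightarrow\Delta$; $(\Box)$ from left premise $\Gamma,\Box\Pi\Rightarrow A,\Delta$ and right premise $\Box\Pi\Rightarrow A$ infer $\Gamma,\Box\Pi\Rightarrow\Box A,\Delta$; $(\mathsf{cut})$ from $\Gamma\Rightarrow A,\Delta$ and $\Gamma,A\Rightarrow\Delta$ infer $\Gamma\Rightarrow\Delta$. An $\infty$-proof is a possibly infinite tree of sequents built by these rules with leaves labelled by initial sequents, in which every infinite branch passes through a right premise of $(\Box)$ infinitely often; $\mathcal P$ is the set of all $\infty$-proofs. The $n$-fragment of an $\infty$-proof is the finite tree obtained by cutting every branch at the $n$-th (from the root) right premise of $(\Box)$. Write $\pi\sim_n\tau$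 if the $n$-fragments of $\pi,\tau$ coincide, and $\pi\sim_0\tau$ always. $\mathcal P_n$ is the set of $\infty$-proofs with no application of $(\mathsf{cut})$ in their $n$-fragment, and $\mathcal P_0=\mathcal P$. A pair $(\pi,\tau)$ is a cut pair with cut formula $A$ and cut result $\Gamma\Rightarrow\Delta$ if $\pi$ is an $\infty$-proof of $\Gamma\Rightarrow\Delta,A$ and $\tau$ is an $\infty$-proof of $A,\Gamma\Rightarrow\Delta$. A mapping $\mathsf u:\mathcal P\times\mathcal P\to\mathcal P$ is $A$-removing if it is non-expansive (i.e. $\pi\sim_n\pi'$ and $\tau\sim_n\tau'$ imply $\mathsf u(\pi,\tau)\sim_n\mathsf u(\pi',\tau')$ for all $n$) and maps every cut pair with cut formula $A$ to an $\infty$-proof of its cut result. It is adequate if for every $n\in\mathbb N$, $\pi,\tau\in\mathcal P_n$ implies $\mathsf u(\pi,\tau)\in\mathcal P_n$. *)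

From Stdlib Require Import List Permutation Arith.
Import ListNotations.

Inductive formula : Type :=
| Var : nat -> formula
| Bot : formula
| Imp : formula -> formula -> formula
| Bx  : formula -> formula.

(* Sequents Gamma => Delta; finite multisets are represented by lists,
   always compared up to permutation. *)
Definition sequent : Type := (list formula * list formula)%type.

Definition seq_eq (s1 s2 : sequent) : Prop :=
  Permutation (fst s1) (fst s2) /\ Permutation (snd s1) (snd s2).

(* For rBox, child 0 is the left premise, child 1 the right
   premise; for rImpL child 0 is the premise Gamma,B=>Delta and child 1 is
   Gamma=>A,Delta; for rCut child 0 is Gamma=>A,Delta and child 1 is
   Gamma,A=>Delta. *)
Inductive rule : Type :=
| rAxVar | rAxBot | rImpL | rImpR | rRefl | rBox | rCut.

CoInductive tree : Type :=
| node : sequent -> rule -> list tree -> tree.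

Definition t_seq (t : tree) : sequent := match t with node s _ _ => s end.
Definition t_rule (t : tree) : rule := match t with node _ r _ => r end.
Definition t_kids (t : tree) : list tree := match t with node _ _ ts => ts end.

Definition local_ok (t : tree) : Prop :=
  let '(G, D) := t_seq t in
  match t_rule t, t_kids t with
  | rAxVar, [] => exists p, In (Var p) G /\ In (Var p) D
  | rAxBot, [] => In Bot G
  | rImpL, [c1; c2] => exists Gm Dl A B,
      seq_eq (G, D) (Imp A B :: Gm, Dl) /\
      seq_eq (t_seq c1) (B :: Gm, Dl) /\ seq_eq (t_seq c2) (Gm, A :: Dl)
  | rImpR, [c] => exists Gm Dl A B,
      seq_eq (G, D) (Gm, Imp A B :: Dl) /\ seq_eq (t_seq c) (A :: Gm, B :: Dl)
  | rRefl, [c] => exists Gm Dl B,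
      seq_eq (G, D) (Bx B :: Gm, Dl) /\ seq_eq (t_seq c) (B :: Bx B :: Gm, Dl)
  | rBox, [c1; c2] => exists Gm Pi Dl A,
      seq_eq (G, D) (Gm ++ map Bx Pi, Bx A :: Dl) /\
      seq_eq (t_seq c1) (Gm ++ map Bx Pi, A :: Dl) /\
      seq_eq (t_seq c2) (map Bx Pi, [A])
  | rCut, [c1; c2] => exists A,
      seq_eq (t_seq c1) (G, A :: D) /\ seq_eq (t_seq c2) (A :: G, D)
  | _, _ => False
  end.

Fixpoint follow (t : tree) (p : list nat) : option tree :=
  match p with
  | [] => Some t
  | i :: p' => match nth_error (t_kids t) i with
               | Some c => follow c p'
               | None => None
               end
  end.

Definition rbstep (t : tree) (i : nat) : bool :=
  match t_rule t with rBox => Nat.eqb i 1 | _ => false end.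

Fixpoint rbcount (t : tree) (p : list nat) : nat :=
  match p with
  | [] => 0
  | i :: p' => (if rbstep t i then 1 else 0) +
               match nth_error (t_kids t) i with
               | Some c => rbcount c p'
               | None => 0
               end
  end.

Definition prefix (d : nat -> nat) (k : nat) : list nat := map d (seq 0 k).

Definition inf_branch (t : tree) (d : nat -> nat) : Prop :=
  forall k, follow t (prefix d k) <> None.

Definition is_proof (t : tree) : Prop :=
  (forall p s, follow t p = Some s -> local_ok s) /\
  (forall d, inf_branch t d ->
     forall k, exists j, k <= j /\
       exists s, follow t (prefix d j) = Some s /\ rbstep s (d j) = true).

Definition proof : Type := { t : tree | is_proof t }.
Definition ptree (p : proof) : tree := proj1_sig p.

(* feq n t1 t2 : the n-fragments of t1 and t2 coincide. The n-fragment cuts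
   every branch at the n-th right premise of (Box); such a right premise
   remains as a leaf (only its sequent belongs to the fragment).
   feq 0 holds always. *)
CoInductive feq : nat -> tree -> tree -> Prop :=
| feq0 : forall t1 t2, feq 0 t1 t2
| feqS : forall k s1 s2 r ts1 ts2,
    seq_eq s1 s2 ->
    length ts1 = length ts2 ->
    (forall i c1 c2, nth_error ts1 i = Some c1 -> nth_error ts2 i = Some c2 ->
       (rbstep (node s1 r ts1) i = true ->
          seq_eq (t_seq c1) (t_seq c2) /\ feq k c1 c2) /\
       (rbstep (node s1 r ts1) i = false -> feq (S k) c1 c2)) ->
    feq (S k) (node s1 r ts1) (node s2 r ts2).

Definition sim (n : nat) (p q : proof) : Prop := feq n (ptree p) (ptree q).

Definition in_Pn (n : nat) (p : proof) : Prop :=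
  forall path s, follow (ptree p) path = Some s ->
    rbcount (ptree p) path < n -> t_rule s <> rCut.

Definition proves (p : proof) (s : sequent) : Prop := seq_eq (t_seq (ptree p)) s.

Definition non_expansive (u : proof -> proof -> proof) : Prop :=
  forall n p p' q q', sim n p p' -> sim n q q' -> sim n (u p q) (u p' q').

Definition removing (A : formula) (u : proof -> proof -> proof) : Prop :=
  non_expansive u /\
  forall (G D : list formula) (p q : proof),
    proves p (G, D ++ [A]) -> proves q (A :: G, D) -> proves (u p q) (G, D).

Definition adequate (u : proof -> proof -> proof) : Prop :=
  forall n p q, in_Pn n p -> in_Pn n q -> in_Pn n (u p q).

(* A cut pair is replaced by a cut-free ∞-proof of its cut result, obtained
   from soundness and cut-free completeness for Grz frames (reflexive,
   transitive, conversely well-founded).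

   Soundness: a world refuting the conclusion of an ∞-proof can be moved to a
   premise, strictly upwards exactly at right premises of (□); by converse
   well-foundedness some branch eventually avoids them, against the progress
   condition.  Hence the cut result of a cut pair is valid (split on the truth
   of the cut formula).

   Completeness: backward proof search applies the invertible rules first and
   (□) only to boxes whose right premise is valid.  On a valid sequent it never
   gets stuck: a stuck state yields a countermodel, obtained by hanging
   countermodels of the failed right premises below a root read off the
   formulas met since the last right premise of (□).  Formula size decreases
   along every step except into right premises of (□), so the search tree is a
   cut-free ∞-proof.  It depends only on the root sequent of the left proof,
   which makes the map non-expansive. *)

From Stdlib Require Import List Permutation Arith Lia Classical ClassicalEpsilon
  FunctionalExtensionality PropExtensionality.
Import ListNotations.

(** * Kripke semantics over Grz frames *)

(* All models share the carrier [world], whose shape allows countably many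
   models to be hung below a fresh root (see [glue_rel]). *)
Inductive world : Type := Root | Br (i : nat) (u : world).

Fixpoint sat (R : world -> world -> Prop) (V : nat -> world -> Prop) (w : world)
    (f : formula) : Prop :=
  match f with
  | Var p => V p w
  | Bot => False
  | Imp A B => sat R V w A -> sat R V w B
  | Bx A => forall v, R w v -> sat R V v A
  end.

Definition grz_frame (R : world -> world -> Prop) : Prop :=
  (forall w, R w w) /\ (forall a b c, R a b -> R b c -> R a c) /\
  well_founded (fun v w => R w v /\ v <> w).

Definition refutes R V w (s : sequent) : Prop :=
  (forall f, In f (fst s) -> sat R V w f) /\ (forall f, In f (snd s) -> ~ sat R V w f).

Definition valid (s : sequent) : Prop :=
  forall R V, grz_frame R -> forall w, ~ refutes R V w s.

Lemma seq_eq_refl s : seq_eq s s.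
Proof. split; apply Permutation_refl. Qed.

Lemma seq_eq_sym s1 s2 : seq_eq s1 s2 -> seq_eq s2 s1.
Proof. intros [H1 H2]; split; apply Permutation_sym; assumption. Qed.

Lemma seq_eq_trans s1 s2 s3 : seq_eq s1 s2 -> seq_eq s2 s3 -> seq_eq s1 s3.
Proof. intros [H1 H2] [H3 H4]; split; eapply Permutation_trans; eassumption. Qed.

Lemma refutes_seq_eq R V w s1 s2 : seq_eq s1 s2 -> refutes R V w s1 -> refutes R V w s2.
Proof.
  intros [HG HD] [Hl Hr]; split; intros f Hf.
  - apply Hl, (Permutation_in _ (Permutation_sym HG) Hf).
  - apply Hr, (Permutation_in _ (Permutation_sym HD) Hf).
Qed.

Lemma refutes_cons_l R V w A G D :
  refutes R V w (A :: G, D) <-> sat R V w A /\ refutes R V w (G, D).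
Proof.
  unfold refutes; simpl; split.
  - intros [Hl Hr]; auto.
  - intros [HA [Hl Hr]]; split; [intros f [<-|Hf]|]; auto.
Qed.

Lemma refutes_cons_r R V w A G D :
  refutes R V w (G, A :: D) <-> ~ sat R V w A /\ refutes R V w (G, D).
Proof.
  unfold refutes; simpl; split.
  - intros [Hl Hr]; auto.
  - intros [HA [Hl Hr]]; split; [|intros f [<-|Hf]]; auto.
Qed.

Lemma valid_seq_eq s1 s2 : seq_eq s1 s2 -> valid s1 -> valid s2.
Proof.
  intros E Hv R V Hframe w Hw.
  exact (Hv R V Hframe w (refutes_seq_eq _ _ _ _ _ (seq_eq_sym _ _ E) Hw)).
Qed.

Lemma valid_incl G D G' D' : incl G G' -> incl D D' -> valid (G, D) -> valid (G', D').
Proof.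
  intros HG HD Hv R V Hframe w [Hl Hr]. apply (Hv R V Hframe w). split; simpl in *; auto.
Qed.

(** * Soundness of ∞-proofs *)

Definition refuted_premise R V w (t : tree) : Prop :=
  exists i c, nth_error (t_kids t) i = Some c /\
    (rbstep t i = false /\ refutes R V w (t_seq c) \/
     rbstep t i = true /\ exists v, R w v /\ v <> w /\ refutes R V v (t_seq c)).

Lemma refuted_premise_here R V w t i c :
  nth_error (t_kids t) i = Some c -> rbstep t i = false -> refutes R V w (t_seq c) ->
  refuted_premise R V w t.
Proof. intros Hc Hb Hw. exists i, c. auto. Qed.

Lemma refutes_box_premise R V w Gm Pi A :
  (forall a b c, R a b -> R b c -> R a c) ->
  (forall f, In f (Gm ++ map Bx Pi) -> sat R V w f) -> ~ sat R V w (Bx A) -> sat R V w A ->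
  exists v, R w v /\ v <> w /\ refutes R V v (map Bx Pi, [A]).
Proof.
  intros Htrans HG HnA HA. destruct (not_all_ex_not _ _ HnA) as [v Hv].
  apply imply_to_and in Hv. destruct Hv as [Hwv HvA].
  exists v. split; [exact Hwv|split; [intros ->; contradiction|]].
  apply refutes_cons_r. split; [exact HvA|split; [|simpl; tauto]].
  intros f Hf. apply in_map_iff in Hf. destruct Hf as [B [<- HB]].
  intros u Hvu. apply (HG (Bx B)); [apply in_or_app; right; apply in_map; exact HB|].
  exact (Htrans _ _ _ Hwv Hvu).
Qed.

Lemma local_ok_refuted_premise R V w t :
  grz_frame R -> local_ok t -> refutes R V w (t_seq t) -> refuted_premise R V w t.
Proof.
  intros [Hrefl [Htrans _]] Hok Hw.
  destruct t as [[G D] r ts]. unfold local_ok in Hok. simpl in Hok, Hw.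
  destruct r; destruct ts as [|c1 [|c2 [|c3 ts]]]; try contradiction.
  - destruct Hok as [p [HG HD]]. destruct (proj2 Hw _ HD (proj1 Hw _ HG)).
  - destruct (proj1 Hw _ Hok).
  - destruct Hok as [Gm [Dl [A [B [E [E1 E2]]]]]].
    apply (refutes_seq_eq _ _ _ _ _ E), refutes_cons_l in Hw. destruct Hw as [HAB Hw].
    destruct (classic (sat R V w A)) as [HA|HA].
    + apply (refuted_premise_here _ _ _ _ 0 c1); try reflexivity.
      apply (refutes_seq_eq _ _ _ _ _ (seq_eq_sym _ _ E1)), refutes_cons_l; auto.
    + apply (refuted_premise_here _ _ _ _ 1 c2); try reflexivity.
      apply (refutes_seq_eq _ _ _ _ _ (seq_eq_sym _ _ E2)), refutes_cons_r; auto.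
  - destruct Hok as [Gm [Dl [A [B [E E1]]]]].
    apply (refutes_seq_eq _ _ _ _ _ E), refutes_cons_r in Hw. destruct Hw as [HAB Hw].
    apply (refuted_premise_here _ _ _ _ 0 c1); try reflexivity.
    apply (refutes_seq_eq _ _ _ _ _ (seq_eq_sym _ _ E1)), refutes_cons_l.
    simpl in HAB. split; [apply NNPP; tauto|apply refutes_cons_r; tauto].
  - destruct Hok as [Gm [Dl [B [E E1]]]].
    apply (refutes_seq_eq _ _ _ _ _ E), refutes_cons_l in Hw. destruct Hw as [HB Hw].
    apply (refuted_premise_here _ _ _ _ 0 c1); try reflexivity.
    apply (refutes_seq_eq _ _ _ _ _ (seq_eq_sym _ _ E1)), refutes_cons_l.
    split; [apply HB, Hrefl|apply refutes_cons_l; auto].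
  - destruct Hok as [Gm [Pi [Dl [A [E [E1 E2]]]]]].
    apply (refutes_seq_eq _ _ _ _ _ E), refutes_cons_r in Hw. destruct Hw as [HnA [HG HD]].
    destruct (classic (sat R V w A)) as [HA|HA].
    + destruct (refutes_box_premise R V w Gm Pi A Htrans HG HnA HA) as [v [Hwv [Hne Hv]]].
      exists 1, c2. split; [reflexivity|right; split; [reflexivity|]].
      exists v. split; [exact Hwv|split; [exact Hne|]].
      exact (refutes_seq_eq _ _ _ _ _ (seq_eq_sym _ _ E2) Hv).
    + apply (refuted_premise_here _ _ _ _ 0 c1); try reflexivity.
      apply (refutes_seq_eq _ _ _ _ _ (seq_eq_sym _ _ E1)), refutes_cons_r.
      split; [|split]; assumption.
  - destruct Hok as [A [E1 E2]].
    destruct (classic (sat R V w A)) as [HA|HA].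
    + apply (refuted_premise_here _ _ _ _ 1 c2); try reflexivity.
      apply (refutes_seq_eq _ _ _ _ _ (seq_eq_sym _ _ E2)), refutes_cons_l; auto.
    + apply (refuted_premise_here _ _ _ _ 0 c1); try reflexivity.
      apply (refutes_seq_eq _ _ _ _ _ (seq_eq_sym _ _ E1)), refutes_cons_r; auto.
Qed.

Lemma prefix_S (d : nat -> nat) k : prefix d (S k) = d 0 :: prefix (fun n => d (S n)) k.
Proof. unfold prefix. simpl. f_equal. rewrite <- seq_shift, map_map. reflexivity. Qed.

Lemma inf_branch_first t d : inf_branch t d -> exists c, nth_error (t_kids t) (d 0) = Some c.
Proof.
  intros H. specialize (H 1). simpl in H.
  destruct (nth_error (t_kids t) (d 0)); [eauto|congruence].
Qed.

Lemma inf_branch_kid t d c : inf_branch t d -> nth_error (t_kids t) (d 0) = Some c ->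
  inf_branch c (fun n => d (S n)).
Proof.
  intros H Hc k. specialize (H (S k)). rewrite prefix_S in H. simpl in H. rewrite Hc in H.
  exact H.
Qed.

Lemma is_proof_kid t i c : is_proof t -> nth_error (t_kids t) i = Some c -> is_proof c.
Proof.
  intros [Hok Hprog] Hc. split.
  - intros p s Hs. apply (Hok (i :: p)). simpl. rewrite Hc. exact Hs.
  - intros d Hd k.
    set (d' := fun m => match m with 0 => i | S m' => d m' end).
    assert (Hd' : inf_branch t d').
    { intros [|k']; [discriminate|]. rewrite prefix_S. simpl. rewrite Hc. apply Hd. }
    destruct (Hprog d' Hd' (S k)) as [[|j] [Hj [s [Hs Hb]]]]; [lia|].
    exists j. split; [lia|]. exists s. rewrite prefix_S in Hs. simpl in Hs. rewrite Hc in Hs. auto.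
Qed.

Lemma follow_prefix_chain (T : nat -> tree) (d : nat -> nat) :
  (forall n, nth_error (t_kids (T n)) (d n) = Some (T (S n))) ->
  forall k, follow (T 0) (prefix d k) = Some (T k).
Proof.
  intros H.
  assert (G : forall k n, follow (T n) (map d (seq n k)) = Some (T (n + k))).
  { induction k; intros n; simpl.
    - rewrite Nat.add_0_r. reflexivity.
    - rewrite H, IHk. do 2 f_equal. lia. }
  intros k. apply (G k 0).
Qed.

Lemma box_free_branch (P : tree -> Prop) :
  (forall t, P t -> exists i c, nth_error (t_kids t) i = Some c /\ rbstep t i = false /\ P c) ->
  forall t, P t -> exists d, inf_branch t d /\
    forall j s, follow t (prefix d j) = Some s -> rbstep s (d j) = false.
Proof.
  intros Hstep t0 H0.
  assert (Hnext : forall x : {t | P t}, {p : nat * {t | P t} |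
    nth_error (t_kids (proj1_sig x)) (fst p) = Some (proj1_sig (snd p)) /\
    rbstep (proj1_sig x) (fst p) = false}).
  { intros [t Ht]. apply constructive_indefinite_description.
    destruct (Hstep t Ht) as [i [c [Hc [Hb Pc]]]]. exists (i, exist _ c Pc). auto. }
  set (T := fix T n : {t | P t} :=
         match n with 0 => exist _ t0 H0 | S m => snd (proj1_sig (Hnext (T m))) end).
  set (d := fun n => fst (proj1_sig (Hnext (T n)))).
  assert (Hfollow := follow_prefix_chain (fun n => proj1_sig (T n)) d
                       (fun n => proj1 (proj2_sig (Hnext (T n))))).
  simpl in Hfollow. exists d. split.
  - intros k. rewrite Hfollow. discriminate.
  - intros j s Hs. rewrite Hfollow in Hs. injection Hs as <-.
    exact (proj2 (proj2_sig (Hnext (T j)))).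
Qed.

Theorem is_proof_valid t : is_proof t -> valid (t_seq t).
Proof.
  intros Ht R V Hframe w. revert t Ht.
  induction w as [w IH] using (well_founded_ind (proj2 (proj2 Hframe))).
  intros t0 Ht0 Hw0.
  destruct (box_free_branch (fun t => is_proof t /\ refutes R V w (t_seq t)))
    with (t := t0) as [d [Hd Hbox]]; [|split; assumption|].
  - intros t [Ht Hw].
    destruct (local_ok_refuted_premise R V w t Hframe (proj1 Ht [] t eq_refl) Hw)
      as [i [c [Hc [[Hb Hwc]|[_ [v [Hwv [Hne Hvc]]]]]]]].
    + exists i, c. eauto using is_proof_kid.
    + exfalso. apply (IH v (conj Hwv Hne) c); eauto using is_proof_kid.
  - destruct (proj2 Ht0 d Hd 0) as [j [_ [s [Hs Hb]]]].
    rewrite (Hbox j s Hs) in Hb. discriminate.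
Qed.

Lemma cut_result_valid t1 t2 G D A : is_proof t1 -> is_proof t2 ->
  seq_eq (t_seq t1) (G, D ++ [A]) -> seq_eq (t_seq t2) (A :: G, D) -> valid (G, D).
Proof.
  intros H1 H2 E1 E2 R V Hframe w [HG HD].
  destruct (classic (sat R V w A)) as [HA|HA].
  - apply (is_proof_valid t2 H2 R V Hframe w).
    apply (refutes_seq_eq _ _ _ _ _ (seq_eq_sym _ _ E2)), refutes_cons_l. repeat split; auto.
  - apply (is_proof_valid t1 H1 R V Hframe w).
    apply (refutes_seq_eq _ _ _ _ _ (seq_eq_sym _ _ E1)). split; [exact HG|].
    intros f Hf. apply in_app_or in Hf. destruct Hf as [Hf|[<-|[]]]; auto.
Qed.

(** * Cut-free proof search *)

(* A search state stands for the sequent [□boxed, ants => sucs]; [boxed]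
   collects the [B] whose [□B] has been treated by (refl). *)
Record state := mkst { boxed : list formula; ants : list formula; sucs : list formula }.

Definition st_seq (x : state) : sequent := (map Bx (boxed x) ++ ants x, sucs x).

Inductive premises := Leaf | Unary (y : state) | Binary (y z : state).

Definition premise_list (k : premises) : list state :=
  match k with Leaf => [] | Unary y => [y] | Binary y z => [y; z] end.

Fixpoint pick (test : formula -> bool) (l : list formula)
    : option (list formula * formula * list formula) :=
  match l with
  | [] => None
  | f :: l' =>
      if test f then Some ([], f, l')
      else match pick test l' with
           | Some (l1, g, l2) => Some (f :: l1, g, l2)
           | None => None
           end
  end.

Lemma pick_some test l l1 f l2 :
  pick test l = Some (l1, f, l2) -> l = l1 ++ f :: l2 /\ test f = true.
Proof.
  revert l1; induction l as [|a l IH]; intros l1; simpl; [discriminate|].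
  destruct (test a) eqn:E; [intros H; injection H as <- <- <-; auto|].
  destruct (pick test l) as [[[m1 g] m2]|]; [|discriminate].
  intros H; injection H as <- <- <-. destruct (IH m1 eq_refl) as [-> ?]; auto.
Qed.

Lemma pick_none test l : pick test l = None -> forall f, In f l -> test f = false.
Proof.
  induction l as [|a l IH]; simpl; [tauto|].
  destruct (test a) eqn:E; [discriminate|].
  destruct (pick test l) as [[[m1 g] m2]|]; [discriminate|].
  intros _ f [<-|Hf]; auto.
Qed.

Definition is_imp (f : formula) : bool := match f with Imp _ _ => true | _ => false end.

Definition is_imp_or_box (f : formula) : bool :=
  match f with Imp _ _ | Bx _ => true | _ => false end.

Definition is_provable_box (Pi : list formula) (f : formula) : bool :=
  match f with
  | Bx A => if excluded_middle_informative (valid (map Bx Pi, [A])) then true else false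
  | _ => false
  end.

(* The fallback [(rAxBot, Leaf)] is a junk value: it is never reached from a
   state with a valid history ([saturated_no_history]). *)
Definition expand (x : state) : rule * premises :=
  let Pi := boxed x in let L := ants x in let R := sucs x in
  if excluded_middle_informative (exists p, In (Var p) L /\ In (Var p) R) then (rAxVar, Leaf)
  else if excluded_middle_informative (In Bot L) then (rAxBot, Leaf)
  else match pick is_imp_or_box L with
  | Some (L1, Imp C D, L2) =>
      (rImpL, Binary (mkst Pi (D :: L1 ++ L2) R) (mkst Pi (L1 ++ L2) (C :: R)))
  | Some (L1, Bx B, L2) => (rRefl, Unary (mkst (B :: Pi) (B :: L1 ++ L2) R))
  | Some _ => (rAxBot, Leaf)
  | None =>
    match pick is_imp R with
    | Some (R1, Imp C D, R2) => (rImpR, Unary (mkst Pi (C :: L) (D :: R1 ++ R2)))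
    | Some _ => (rAxBot, Leaf)
    | None =>
      match pick (is_provable_box Pi) R with
      | Some (R1, Bx A, R2) =>
          (rBox, Binary (mkst Pi L (A :: R1 ++ R2)) (mkst [] (map Bx Pi) [A]))
      | _ => (rAxBot, Leaf)
      end
    end
  end.

Definition saturated (x : state) : Prop :=
  ~ (exists p, In (Var p) (ants x) /\ In (Var p) (sucs x)) /\ ~ In Bot (ants x) /\
  (forall f, In f (ants x) -> is_imp_or_box f = false) /\
  (forall f, In f (sucs x) -> is_imp f = false) /\
  (forall A, In (Bx A) (sucs x) -> ~ valid (map Bx (boxed x), [A])).

Inductive expand_spec (x : state) : rule * premises -> Prop :=
| ExpandVar p : In (Var p) (ants x) -> In (Var p) (sucs x) -> expand_spec x (rAxVar, Leaf)
| ExpandBot : In Bot (ants x) -> expand_spec x (rAxBot, Leaf)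
| ExpandImpL L1 C D L2 : ants x = L1 ++ Imp C D :: L2 ->
    expand_spec x (rImpL, Binary (mkst (boxed x) (D :: L1 ++ L2) (sucs x))
                                 (mkst (boxed x) (L1 ++ L2) (C :: sucs x)))
| ExpandRefl L1 B L2 : ants x = L1 ++ Bx B :: L2 ->
    expand_spec x (rRefl, Unary (mkst (B :: boxed x) (B :: L1 ++ L2) (sucs x)))
| ExpandImpR R1 C D R2 : sucs x = R1 ++ Imp C D :: R2 ->
    expand_spec x (rImpR, Unary (mkst (boxed x) (C :: ants x) (D :: R1 ++ R2)))
| ExpandBox R1 A R2 : sucs x = R1 ++ Bx A :: R2 -> valid (map Bx (boxed x), [A]) ->
    expand_spec x (rBox, Binary (mkst (boxed x) (ants x) (A :: R1 ++ R2))
                                (mkst [] (map Bx (boxed x)) [A]))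
| ExpandStuck : saturated x -> expand_spec x (rAxBot, Leaf).

Lemma expandP x : expand_spec x (expand x).
Proof.
  unfold expand.
  destruct excluded_middle_informative as [[p [HL HR]]|Hvar]; [exact (ExpandVar x p HL HR)|].
  destruct excluded_middle_informative as [Hbot|Hbot]; [exact (ExpandBot x Hbot)|].
  destruct (pick is_imp_or_box (ants x)) as [[[L1 f] L2]|] eqn:EL.
  { apply pick_some in EL. destruct EL as [EL Hf].
    destruct f; try discriminate; [apply ExpandImpL|apply ExpandRefl]; exact EL. }
  destruct (pick is_imp (sucs x)) as [[[R1 f] R2]|] eqn:ER.
  { apply pick_some in ER. destruct ER as [ER Hf].
    destruct f; try discriminate. apply ExpandImpR; exact ER. }
  destruct (pick (is_provable_box (boxed x)) (sucs x)) as [[[R1 f] R2]|] eqn:EB.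
  { apply pick_some in EB. destruct EB as [EB Hf].
    destruct f; try discriminate. simpl in Hf.
    destruct excluded_middle_informative as [Hv|]; [|discriminate].
    apply ExpandBox; assumption. }
  apply ExpandStuck. split; [exact Hvar|split; [exact Hbot|split; [|split]]].
  - exact (pick_none _ _ EL).
  - exact (pick_none _ _ ER).
  - intros A HA Hv. assert (H := pick_none _ _ EB _ HA). simpl in H.
  destruct excluded_middle_informative; [discriminate|contradiction].
Qed.

CoFixpoint gen (x : state) : tree :=
  node (st_seq x) (fst (expand x))
    (match snd (expand x) with
     | Leaf => []
     | Unary y => [gen y]
     | Binary y z => [gen y; gen z]
     end).

Lemma t_kids_gen x : t_kids (gen x) = map gen (premise_list (snd (expand x))).
Proof. simpl. destruct (snd (expand x)); reflexivity. Qed.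

Lemma t_rule_gen x : t_rule (gen x) = fst (expand x).
Proof. reflexivity. Qed.

Lemma gen_not_cut x : t_rule (gen x) <> rCut.
Proof. rewrite t_rule_gen. destruct (expandP x); discriminate. Qed.

Lemma kid_gen x i c : nth_error (t_kids (gen x)) i = Some c ->
  exists y, c = gen y /\ nth_error (premise_list (snd (expand x))) i = Some y.
Proof.
  rewrite t_kids_gen, nth_error_map.
  destruct (nth_error (premise_list (snd (expand x))) i); simpl; [|discriminate].
  intros H; injection H as <-. eauto.
Qed.

Fixpoint fsize (f : formula) : nat :=
  match f with
  | Var _ | Bot => 1
  | Imp A B => S (fsize A + fsize B)
  | Bx A => S (fsize A)
  end.

Definition weight (x : state) : nat :=
  list_sum (map fsize (ants x)) + list_sum (map fsize (sucs x)).

Lemma expand_weight x i y : nth_error (premise_list (snd (expand x))) i = Some y ->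
  (fst (expand x) = rBox /\ i = 1) \/ weight y < weight x.
Proof.
  unfold weight.
  destruct (expandP x) as [| |L1 C D L2 E|L1 B L2 E|R1 C D R2 E|R1 A R2 E _|];
    destruct i as [|[|[|i]]]; simpl; try discriminate; intros H; injection H as <-;
    auto; right; simpl; rewrite ?E, ?map_app, ?list_sum_app; simpl; lia.
Qed.

Lemma gen_box_ahead x d : inf_branch (gen x) d ->
  exists j s, follow (gen x) (prefix d j) = Some s /\ rbstep s (d j) = true.
Proof.
  revert d. induction x as [x IH] using (well_founded_ind (Wf_nat.well_founded_ltof _ weight)).
  intros d Hd. destruct (inf_branch_first _ _ Hd) as [c Ec].
  destruct (rbstep (gen x) (d 0)) eqn:Eb; [exists 0, (gen x); auto|].
  destruct (kid_gen _ _ _ Ec) as [y [-> Ey]].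
  destruct (expand_weight _ _ _ Ey) as [[Hbox Hi]|Hlt].
  - unfold rbstep in Eb. rewrite t_rule_gen, Hbox, Hi in Eb. discriminate.
  - destruct (IH y Hlt _ (inf_branch_kid _ _ _ Hd Ec)) as [j [s [Hs Hb]]].
    exists (S j), s. rewrite prefix_S. cbn [follow]. rewrite Ec. auto.
Qed.

Lemma gen_box_infinitely_often k : forall x d, inf_branch (gen x) d ->
  exists j, k <= j /\ exists s, follow (gen x) (prefix d j) = Some s /\ rbstep s (d j) = true.
Proof.
  induction k as [|k IH]; intros x d Hd.
  - destruct (gen_box_ahead x d Hd) as [j Hj]. exists j. split; [lia|exact Hj].
  - destruct (inf_branch_first _ _ Hd) as [c Ec].
    destruct (kid_gen _ _ _ Ec) as [y [-> _]].
    destruct (IH y _ (inf_branch_kid _ _ _ Hd Ec)) as [j [Hj [s [Hs Hb]]]].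
    exists (S j). split; [lia|]. exists s. rewrite prefix_S. cbn [follow]. rewrite Ec. auto.
Qed.

Lemma follow_gen_invariant (P : state -> Prop) :
  (forall x y, P x -> In y (premise_list (snd (expand x))) -> P y) ->
  forall p x s, P x -> follow (gen x) p = Some s -> exists y, s = gen y /\ P y.
Proof.
  intros HP p. induction p as [|i p IH]; intros x s Hx Hs; cbn [follow] in Hs.
  - injection Hs as <-. eauto.
  - destruct (nth_error (t_kids (gen x)) i) as [c|] eqn:Ec; [|discriminate].
    destruct (kid_gen _ _ _ Ec) as [y [-> Ey]].
    exact (IH y s (HP x y Hx (nth_error_In _ _ Ey)) Hs).
Qed.

(** * Histories and countermodels of stuck states *)

Definition closed_left (Pi HL HR : list formula) (f : formula) : Prop :=
  match f with
  | Imp C D => In C HR \/ In D HL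
  | Bx B => In B HL /\ In B Pi
  | _ => False
  end.

Definition closed_right (HL HR : list formula) (f : formula) : Prop :=
  match f with
  | Imp C D => In C HL /\ In D HR
  | Bx A => In A HR
  | _ => False
  end.

(* [(HL, HR)] records every formula met since the last right premise of (□);
   the ones that have left the current sequent were decomposed, their
   components being recorded too.  Validity of the current sequent alone would
   not do: a stuck state needs every [B] in [boxed] true at the root of its
   countermodel, but [B] itself may have been decomposed away. *)
Definition valid_history (x : state) (HL HR : list formula) : Prop :=
  valid (HL, HR) /\ incl (ants x) HL /\ incl (sucs x) HR /\
  (forall f, In f HL -> In f (ants x) \/ closed_left (boxed x) HL HR f) /\
  (forall f, In f HR -> In f (sucs x) \/ closed_right HL HR f).

Definition has_valid_history (x : state) : Prop := exists HL HR, valid_history x HL HR.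

Lemma closed_left_incl Pi HL HR Pi' HL' HR' f : incl Pi Pi' -> incl HL HL' -> incl HR HR' ->
  closed_left Pi HL HR f -> closed_left Pi' HL' HR' f.
Proof. destruct f; simpl; intuition. Qed.

Lemma closed_right_incl HL HR HL' HR' f : incl HL HL' -> incl HR HR' ->
  closed_right HL HR f -> closed_right HL' HR' f.
Proof. destruct f; simpl; intuition. Qed.

Lemma in_elt_weaken (f g : formula) l1 l2 : In f (l1 ++ l2) -> In f (l1 ++ g :: l2).
Proof. intros H. apply in_app_or in H. apply in_or_app. simpl. tauto. Qed.

Lemma history_left x L1 g L2 NL NR Pi HL HR :
  valid_history x HL HR -> ants x = L1 ++ g :: L2 -> incl (boxed x) Pi ->
  closed_left Pi (NL ++ HL) (NR ++ HR) g ->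
  valid_history (mkst Pi (NL ++ L1 ++ L2) (NR ++ sucs x)) (NL ++ HL) (NR ++ HR).
Proof.
  intros [Hv [HiL [HiR [CL CR]]]] EL HPi Hg. rewrite EL in HiL, CL.
  assert (HL' : incl HL (NL ++ HL)) by apply incl_appr, incl_refl.
  assert (HR' : incl HR (NR ++ HR)) by apply incl_appr, incl_refl.
  split; [|split; [|split; [|split]]]; simpl.
  - exact (valid_incl _ _ _ _ HL' HR' Hv).
  - apply incl_app_app; [apply incl_refl|]. intros f Hf. apply HiL, in_elt_weaken, Hf.
  - apply incl_app_app; [apply incl_refl|exact HiR].
  - intros f Hf. apply in_app_or in Hf. destruct Hf as [Hf|Hf]; [left; apply in_or_app; auto|].
    destruct (CL f Hf) as [Hf'|Hf'].
    + apply in_elt_inv in Hf'. destruct Hf' as [->|Hf']; [right; exact Hg|].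
      left. apply in_or_app. auto.
    + right. exact (closed_left_incl _ _ _ _ _ _ _ HPi HL' HR' Hf').
  - intros f Hf. apply in_app_or in Hf. destruct Hf as [Hf|Hf]; [left; apply in_or_app; auto|].
    destruct (CR f Hf) as [Hf'|Hf']; [left; apply in_or_app; auto|].
    right. exact (closed_right_incl _ _ _ _ _ HL' HR' Hf').
Qed.

Lemma history_right x R1 g R2 NL NR HL HR :
  valid_history x HL HR -> sucs x = R1 ++ g :: R2 ->
  closed_right (NL ++ HL) (NR ++ HR) g ->
  valid_history (mkst (boxed x) (NL ++ ants x) (NR ++ R1 ++ R2)) (NL ++ HL) (NR ++ HR).
Proof.
  intros [Hv [HiL [HiR [CL CR]]]] ER Hg. rewrite ER in HiR, CR.
  assert (HL' : incl HL (NL ++ HL)) by apply incl_appr, incl_refl.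
  assert (HR' : incl HR (NR ++ HR)) by apply incl_appr, incl_refl.
  split; [|split; [|split; [|split]]]; simpl.
  - exact (valid_incl _ _ _ _ HL' HR' Hv).
  - apply incl_app_app; [apply incl_refl|exact HiL].
  - apply incl_app_app; [apply incl_refl|]. intros f Hf. apply HiR, in_elt_weaken, Hf.
  - intros f Hf. apply in_app_or in Hf. destruct Hf as [Hf|Hf]; [left; apply in_or_app; auto|].
    destruct (CL f Hf) as [Hf'|Hf']; [left; apply in_or_app; auto|].
    right. exact (closed_left_incl _ _ _ _ _ _ _ (incl_refl _) HL' HR' Hf').
  - intros f Hf. apply in_app_or in Hf. destruct Hf as [Hf|Hf]; [left; apply in_or_app; auto|].
    destruct (CR f Hf) as [Hf'|Hf'].
    + apply in_elt_inv in Hf'. destruct Hf' as [->|Hf']; [right; exact Hg|].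
      left. apply in_or_app. auto.
    + right. exact (closed_right_incl _ _ _ _ _ HL' HR' Hf').
Qed.

Lemma history_start G D : valid (G, D) -> valid_history (mkst [] G D) G D.
Proof. intros Hv. repeat split; auto using incl_refl. Qed.

Lemma expand_history x y : has_valid_history x ->
  In y (premise_list (snd (expand x))) -> has_valid_history y.
Proof.
  intros [HL [HR Hx]].
  destruct (expandP x) as [| |L1 C D L2 E|L1 B L2 E|R1 C D R2 E|R1 A R2 E Hv|];
    simpl; intros Hy; repeat destruct Hy as [<-|Hy]; try contradiction.
  - exists ([D] ++ HL), ([] ++ HR).
    apply (history_left x L1 (Imp C D) L2); simpl; auto using incl_refl.
  - exists ([] ++ HL), ([C] ++ HR).
    apply (history_left x L1 (Imp C D) L2); simpl; auto using incl_refl.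
  - exists ([B] ++ HL), ([] ++ HR).
    apply (history_left x L1 (Bx B) L2); simpl; auto using incl_tl, incl_refl.
  - exists ([C] ++ HL), ([D] ++ HR). apply (history_right x R1 (Imp C D) R2); simpl; auto.
  - exists ([] ++ HL), ([A] ++ HR). apply (history_right x R1 (Bx A) R2); simpl; auto.
  - exists (map Bx (boxed x)), [A]. apply history_start, Hv.
Qed.

Record pointed_model := { rel : world -> world -> Prop; val : nat -> world -> Prop; point : world }.

Lemma eq_grz_frame : grz_frame eq.
Proof.
  split; [|split]; [reflexivity|congruence|].
  intros a. constructor. intros b [-> Hne]. contradiction.
Qed.

Section Glue.

Variables (attached : nat -> Prop) (M : nat -> pointed_model) (atoms : list formula).

Definition glue_rel (a b : world) : Prop :=
  match a, b with
  | Root, Root => True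
  | Root, Br i u => attached i /\ rel (M i) (point (M i)) u
  | Br _ _, Root => False
  | Br i u, Br j v => i = j /\ rel (M i) u v
  end.

Definition glue_val (p : nat) (a : world) : Prop :=
  match a with Root => In (Var p) atoms | Br i u => val (M i) p u end.

Lemma sat_glue_Br f i u : sat glue_rel glue_val (Br i u) f <-> sat (rel (M i)) (val (M i)) u f.
Proof.
  revert u. induction f as [p| |A IHA B IHB|A IHA]; intros u; simpl; try tauto.
  - rewrite IHA, IHB. tauto.
  - split.
    + intros H v Hv. apply IHA, H. simpl. auto.
    + intros H [|j v] Hv; simpl in Hv; [contradiction|]. destruct Hv as [<- Hv]. apply IHA, H, Hv.
Qed.

Lemma glue_frame : (forall i, grz_frame (rel (M i))) -> grz_frame glue_rel.
Proof.
  intros Hframe. split; [|split].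
  - intros [|i u]; simpl; auto. split; [reflexivity|]. apply (Hframe i).
  - intros [|i u] [|j v] [|k z]; simpl; try tauto.
    + intros [Hj Hv] [<- Hz]. split; [exact Hj|]. eapply (Hframe j); eauto.
    + intros [<- Hv] [<- Hz]. split; [reflexivity|]. eapply (Hframe i); eauto.
  - assert (HBr : forall i u, Acc (fun v w => glue_rel w v /\ v <> w) (Br i u)).
    { intros i u. induction (proj2 (proj2 (Hframe i)) u) as [u _ IH].
      constructor. intros [|j v] [Hv Hne]; simpl in Hv; [contradiction|].
      destruct Hv as [<- Hv]. apply IH. split; [exact Hv|]. intros ->. auto. }
    intros [|i u]; [constructor; intros [|j v] [_ Hne]; [congruence|]|]; apply HBr.
Qed.

End Glue.

Definition box_index (x : state) (i : nat) : Prop := exists A, nth_error (sucs x) i = Some (Bx A).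

Lemma glued_root_refutes x HL HR (M : nat -> pointed_model) :
  saturated x -> valid_history x HL HR -> (forall i, grz_frame (rel (M i))) ->
  (forall i A, nth_error (sucs x) i = Some (Bx A) ->
     refutes (rel (M i)) (val (M i)) (point (M i)) (map Bx (boxed x), [A])) ->
  refutes (glue_rel (box_index x) M) (glue_val M (ants x)) Root (HL, HR).
Proof.
  intros [Hvar [Hbot [Hants [Hsucs _]]]] [_ [_ [_ [CL CR]]]] Hframe HM.
  set (R := glue_rel (box_index x) M). set (V := glue_val M (ants x)).
  enough (H : forall f, (In f HL -> sat R V Root f) /\ (In f HR -> ~ sat R V Root f))
    by (split; intros f Hf; apply (H f), Hf).
  induction f as [p| |C IHC D IHD|B IHB]; split; intros Hf.
  - destruct (CL _ Hf) as [H|[]]. exact H.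
  - destruct (CR _ Hf) as [H|[]]. intros Hp. apply Hvar. eauto.
  - destruct (CL _ Hf) as [H|[]]. contradiction.
  - simpl. tauto.
  - destruct (CL _ Hf) as [H|[H|H]]; [discriminate (Hants _ H)| |]; simpl; intros HC.
    + destruct (proj2 IHC H HC).
    + exact (proj1 IHD H).
  - destruct (CR _ Hf) as [H|[HC HD]]; [discriminate (Hsucs _ H)|].
    simpl. intros HI. exact (proj2 IHD HD (HI (proj1 IHC HC))).
  - destruct (CL _ Hf) as [H|[HB Hboxed]]; [discriminate (Hants _ H)|].
    intros [|i u] Hu; [exact (proj1 IHB HB)|].
    destruct Hu as [[A HA] Hu]. apply sat_glue_Br.
    apply (proj1 (HM i A HA) (Bx B)); [apply in_map, Hboxed|exact Hu].
  - intros HsB. destruct (CR _ Hf) as [H|H]; [|exact (proj2 IHB H (HsB Root I))].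
    destruct (In_nth_error _ _ H) as [i Hi].
    apply (proj2 (HM i B Hi) B (or_introl eq_refl)), (sat_glue_Br (box_index x) M (ants x) B i).
    apply HsB. split; [exists B; exact Hi|apply (Hframe i)].
Qed.

Lemma not_valid_countermodel s : ~ valid s ->
  exists M : pointed_model, grz_frame (rel M) /\ refutes (rel M) (val M) (point M) s.
Proof.
  intros Hn. apply NNPP. intros Hno. apply Hn. intros R V Hframe w Hw.
  apply Hno. exists {| rel := R; val := V; point := w |}. auto.
Qed.

Lemma saturated_no_history x HL HR : saturated x -> valid_history x HL HR -> False.
Proof.
  intros Hsat Hx. pose proof Hsat as (_ & _ & _ & _ & Hunprovable).
  destruct (choice (fun i (Mi : pointed_model) => grz_frame (rel Mi) /\
      forall A, nth_error (sucs x) i = Some (Bx A) ->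
        refutes (rel Mi) (val Mi) (point Mi) (map Bx (boxed x), [A]))) as [M HM].
  { intros i. destruct (classic (box_index x i)) as [[A HA]|Hi].
    - destruct (not_valid_countermodel _ (Hunprovable A (nth_error_In _ _ HA)))
        as [Mi [Hframe HMi]].
      exists Mi. split; [exact Hframe|].
      intros A' HA'. rewrite HA in HA'. injection HA' as <-. exact HMi.
    - exists {| rel := eq; val := fun _ _ => False; point := Root |}.
      split; [exact eq_grz_frame|]. intros A HA. exfalso. apply Hi. exists A. exact HA. }
  apply (proj1 Hx _ (glue_val M (ants x)) (glue_frame (box_index x) M (fun i => proj1 (HM i)))
           Root).
  apply glued_root_refutes; [exact Hsat|exact Hx|exact (fun i => proj1 (HM i))|].
  intros i A HA. exact (proj2 (HM i) A HA).
Qed.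

(** * Correctness of the search *)

Lemma perm_to_front (g : formula) X L1 L2 : Permutation (X ++ L1 ++ g :: L2) (g :: X ++ L1 ++ L2).
Proof. rewrite !app_assoc. symmetry. apply Permutation_middle. Qed.

Lemma gen_local_ok x : has_valid_history x -> local_ok (gen x).
Proof.
  intros [HL [HR Hx]]. unfold local_ok. rewrite t_rule_gen, t_kids_gen.
  destruct (expandP x) as [p Hp Hp'|Hbot|L1 C D L2 E|L1 B L2 E|R1 C D R2 E|R1 A R2 E Hv|Hsat];
    unfold st_seq; cbn; rewrite ?E.
  - exists p. split; [apply in_or_app; right|]; assumption.
  - apply in_or_app. right. exact Hbot.
  - exists (map Bx (boxed x) ++ L1 ++ L2), (sucs x), C, D.
    split; [|split]; split; try apply Permutation_refl.
    + apply perm_to_front.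
    + apply (perm_to_front D _ []).
  - exists (map Bx (boxed x) ++ L1 ++ L2), (sucs x), B.
    split; split; try apply Permutation_refl.
    + apply perm_to_front.
    + simpl. eapply Permutation_trans; [apply perm_skip, (perm_to_front B _ [])|apply perm_swap].
  - exists (map Bx (boxed x) ++ ants x), (R1 ++ R2), C, D.
    split; split; try apply Permutation_refl.
    + apply (perm_to_front _ []).
    + apply (perm_to_front C _ []).
  - exists (ants x), (boxed x), (R1 ++ R2), A.
    split; [|split]; split; try apply Permutation_refl.
    + apply Permutation_app_comm.
    + apply (perm_to_front _ []).
    + apply Permutation_app_comm.
  - destruct (saturated_no_history x HL HR Hsat Hx).
Qed.

Definition search (s : sequent) : tree := gen (mkst [] (fst s) (snd s)).

Lemma search_seq s : t_seq (search s) = s.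
Proof. destruct s. reflexivity. Qed.

Theorem search_is_proof s : valid s -> is_proof (search s).
Proof.
  intros Hv. split.
  - intros p t Ht.
    assert (H0 : has_valid_history (mkst [] (fst s) (snd s))).
    { exists (fst s), (snd s). apply history_start. destruct s. exact Hv. }
    destruct (follow_gen_invariant _ expand_history p _ t H0 Ht) as [y [-> Hy]].
    exact (gen_local_ok y Hy).
  - intros d Hd k. apply gen_box_infinitely_often, Hd.
Qed.

Lemma search_cut_free s p t : follow (search s) p = Some t -> t_rule t <> rCut.
Proof.
  intros Ht.
  destruct (follow_gen_invariant (fun _ => True) (fun _ _ _ _ => I) p (mkst [] (fst s) (snd s))
             t I Ht) as [y [-> _]].
  apply gen_not_cut.
Qed.

(** * The cut-removing map *)

Lemma feq_refl : forall n t, feq n t t.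
Proof.
  cofix CIH. intros [|k] [s r ts]; constructor; [apply seq_eq_refl|reflexivity|].
  intros i c1 c2 H1 H2. rewrite H1 in H2. injection H2 as <-.
  split; intros _; [split; [apply seq_eq_refl|]|]; apply CIH.
Qed.

Lemma feq_root k t1 t2 : feq (S k) t1 t2 -> seq_eq (t_seq t1) (t_seq t2).
Proof. intros H. inversion H. assumption. Qed.

Definition cut_result (A : formula) (p : proof) : sequent :=
  epsilon (inhabits ([], [])) (fun s => seq_eq (fst s, snd s ++ [A]) (t_seq (ptree p))).

(* [q] is ignored: it only serves to make the cut result valid
   ([cut_result_valid]), and the output depends on [p] only through its root
   sequent. *)
Definition remove_cut (A : formula) (p q : proof) : proof :=
  match excluded_middle_informative (valid (cut_result A p)) with
  | left H => exist _ (search (cut_result A p)) (search_is_proof _ H)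
  | right _ => p
  end.

Lemma cut_result_seq_eq A p p' :
  seq_eq (t_seq (ptree p)) (t_seq (ptree p')) -> cut_result A p = cut_result A p'.
Proof.
  intros E. unfold cut_result. f_equal. apply functional_extensionality. intros s.
  apply propositional_extensionality. split; intros H.
  - exact (seq_eq_trans _ _ _ H E).
  - exact (seq_eq_trans _ _ _ H (seq_eq_sym _ _ E)).
Qed.

Lemma cut_result_spec A p G D : proves p (G, D ++ [A]) -> seq_eq (cut_result A p) (G, D).
Proof.
  intros Hp.
  pose proof (epsilon_spec (inhabits ([], []))
    (fun s => seq_eq (fst s, snd s ++ [A]) (t_seq (ptree p)))
    (ex_intro _ (G, D) (seq_eq_sym _ _ Hp))) as Hs.
  fold (cut_result A p) in Hs. destruct (seq_eq_trans _ _ _ Hs Hp) as [HG HD].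
  split; [exact HG|exact (Permutation_app_inv_r _ _ _ HD)].
Qed.

Lemma remove_cut_non_expansive A : non_expansive (remove_cut A).
Proof.
  intros [|k] p p' q q' Hp _; [constructor|].
  unfold remove_cut. rewrite (cut_result_seq_eq A p p' (feq_root _ _ _ Hp)).
  destruct excluded_middle_informative; [apply feq_refl|exact Hp].
Qed.

Lemma remove_cut_removing A : removing A (remove_cut A).
Proof.
  split; [apply remove_cut_non_expansive|]. intros G D p q Hp Hq.
  pose proof (cut_result_spec A p G D Hp) as Hs.
  assert (Hv : valid (cut_result A p)).
  { apply (valid_seq_eq _ _ (seq_eq_sym _ _ Hs)).
    exact (cut_result_valid _ _ G D A (proj2_sig p) (proj2_sig q) Hp Hq). }
  unfold remove_cut. destruct excluded_middle_informative; [|contradiction].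
  unfold proves, ptree. simpl proj1_sig. rewrite search_seq. exact Hs.
Qed.

Lemma remove_cut_adequate A : adequate (remove_cut A).
Proof.
  intros n p q Hp _. unfold remove_cut. destruct excluded_middle_informative; [|exact Hp].
  intros path s Hs _. exact (search_cut_free _ _ _ Hs).
Qed.

Theorem lemma6p4 : forall A : formula,
  exists u : proof -> proof -> proof, removing A u /\ adequate u.
Proof.
  intros A. exists (remove_cut A). split; [apply remove_cut_removing|apply remove_cut_adequate].
Qed.
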